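(* For every closed $M\in\Lambda$, $[\![M]\!]$ is canonical. Moreover, if $t$ is canonical and $t\rightarrow u$ in $\Phi$, then $u$ is canonical.
   Context: $\lambda$-terms: $M::=x\mid\lambda x.M\mid MN$, $x$ from a denumerable set $\Upsilon$ of variables with a fixed total order; $\Lambda$ is the set of terms; $FV(M)$ is the ordered sequence (without repetitions) of free variables; $M$ is closed if it is empty. $\Phi$ is the constructor rewrite system with binary function symbol $\mathbf{app}$ and, for every $M\in\Lambda$, $x\in\Upsilon$, a constructor $c_{x,M}$ of arity the length of $FV(\lambda x.M)$. $[\![x]\!]=x$, $[\![\lambda x.M]\!]=c_{x,M}(x_1,\dots,x_n)$ with $FV(\lambda x.M)=x_1,\dots,x_n$, $[\![MN]\!]=\mathbf{app}([\![M]\!],[\![N]\!])$. Rules: $\mathbf{app}(c_{x,M}(x_1,\dots,x_n),x)\rightarrow[\![M]\!]$ with $FV(\lambda x.M)=x_1,\dots,x_n$. Rewriting is call-by-value: a step replaces anywhere a subterm $l\sigma$ by $r\sigma$, $l\rightarrow r$ a rule, $\sigma$ mapping variables to constructor terms (closed terms built only from constructors). A closed term $t$ of $\Phi$ is canonical if either $t$ is a constructor term or $t=\mathbf{app}(u,v)$ with $u,v$ canonical. *)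

From mathcomp Require Import all_boot.
Set Implicit Arguments. Unset Strict Implicit. Unset Printing Implicit Defensive.

Inductive lterm : Type :=
| Var : nat -> lterm
| Lam : nat -> lterm -> lterm
| App : lterm -> lterm -> lterm.

Fixpoint fvl (M : lterm) : seq nat :=
  match M with
  | Var x => [:: x]
  | Lam x N => [seq y <- fvl N | y != x]
  | App N P => fvl N ++ fvl P
  end.

Definition fv (M : lterm) : seq nat := sort leq (undup (fvl M)).

Definition closed_lterm (M : lterm) : Prop := fv M = [::].

(* terms of Phi: variables, app, and constructors c_{x,M}(args) *)
Inductive pterm : Type :=
| PVar : nat -> pterm
| PApp : pterm -> pterm -> pterm
| PCon : nat -> lterm -> seq pterm -> pterm.

Definition arity (x : nat) (M : lterm) : nat := size (fv (Lam x M)).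

Fixpoint is_constr (t : pterm) : bool :=
  match t with
  | PCon x M args => (size args == arity x M) && all is_constr args
  | _ => false
  end.

Fixpoint canonical (t : pterm) : bool :=
  is_constr t ||
  match t with
  | PApp u v => canonical u && canonical v
  | _ => false
  end.

Fixpoint tr (M : lterm) : pterm :=
  match M with
  | Var x => PVar x
  | Lam x N => PCon x N (map PVar (fv (Lam x N)))
  | App N P => PApp (tr N) (tr P)
  end.

Fixpoint psubst (s : nat -> pterm) (t : pterm) : pterm :=
  match t with
  | PVar y => s y
  | PApp u v => PApp (psubst s u) (psubst s v)
  | PCon x M args => PCon x M (map (psubst s) args)
  end.

Definition rule_lhs (x : nat) (M : lterm) : pterm :=
  PApp (PCon x M (map PVar (fv (Lam x M)))) (PVar x).
Definition rule_rhs (x : nat) (M : lterm) : pterm := tr M.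

(* call-by-value one-step rewriting in Phi *)
Inductive step : pterm -> pterm -> Prop :=
| step_root : forall (x : nat) (M : lterm) (s : nat -> pterm),
    (forall y, is_constr (s y)) ->
    step (psubst s (rule_lhs x M)) (psubst s (rule_rhs x M))
| step_appl : forall t t' u, step t t' -> step (PApp t u) (PApp t' u)
| step_appr : forall t u u', step u u' -> step (PApp t u) (PApp t u')
| step_con : forall x M args1 t t' args2, step t t' ->
    step (PCon x M (args1 ++ t :: args2)) (PCon x M (args1 ++ t' :: args2)).

From mathcomp Require Import all_boot.

(* A closed lambda-term translates to an application tree of 0-ary
   constructors, so it is canonical.  A rewrite step from a canonical term
   either fires a rule at an application node, whose instantiated right-hand
   side [[M]]σ is canonical because σ only substitutes constructor terms, or
   happens strictly inside an application node; it can never happen inside a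
   constructor term, since those are irreducible. *)

Lemma fv_eq_nil (M : lterm) : (fv M = [::]) <-> (fvl M = [::]).
Proof.
split=> [|fvlM]; last by rewrite /fv fvlM.
move=> /(congr1 size); rewrite size_sort /= => /eqP; rewrite size_eq0 => /eqP.
exact: undup_nil.
Qed.

Lemma constr_irreducible {t u : pterm} : step t u -> ~~ is_constr t.
Proof.
elim=> //= x M args1 t0 t' args2 _ t0_irr.
by rewrite all_cat /= (negbTE t0_irr) !andbF.
Qed.

Lemma canonical_psubst_tr (s : nat -> pterm) (M : lterm) :
  (forall y, is_constr (s y)) -> canonical (psubst s (tr M)).
Proof.
move=> s_constr; elim: M => [y|x N _|N IHN P IHP] /=.
- by case: (s y) (s_constr y) => //= ? ? ? ->.
- rewrite /canonical -map_comp size_map /arity eqxx all_map /=.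
  by apply/orP; left; apply/allP => z _; exact: s_constr.
- by rewrite IHN IHP.
Qed.

Lemma canonical_tr_fvl_nil (M : lterm) : fvl M = [::] -> canonical (tr M).
Proof.
elim: M => [//|x N _|N IHN P IHP].
- by move=> /(fv_eq_nil (Lam x N)) fvM /=; rewrite fvM /arity fvM.
- by move=> /nilP; rewrite /= cat_nilp => /andP[/nilP/IHN -> /nilP/IHP ->].
Qed.

Lemma canonical_step (t u : pterm) : step t u -> canonical t -> canonical u.
Proof.
elim=> [x M s s_constr _|t0 t' u0 _ IH|t0 u0 u' _ IH|x M a1 t0 t' a2 t0t' _].
- exact: canonical_psubst_tr.
- by move=> /= /andP[/IH -> ->].
- by move=> /= /andP[-> /IH ->].
- move=> /= /orP[/andP[_]|//]; rewrite all_cat /= => /and3P[_ t0_constr _].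
  by move: (constr_irreducible t0t'); rewrite t0_constr.
Qed.

Theorem lemma2 :
  (forall M : lterm, closed_lterm M -> canonical (tr M)) /\
  (forall t u : pterm, canonical t -> step t u -> canonical u).
Proof.
split=> [M /fv_eq_nil|t u canon_t tu]; first exact: canonical_tr_fvl_nil.
exact: canonical_step tu canon_t.
Qed.
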